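(* Let $g^{bf}$ be the maximum-entropy element of $P$ and let $V=\min_{z\in P}z\cdot\log z$. For every $\theta^{ref}\in\mathbb{R}^m$, $$d(\eta,g^{bf})\;\le\;-V+\eta\cdot\log\eta\;\le\;d\big(\eta,g^{(\theta^{ref})}\big)+2\,\epsilon\cdot|\theta^{ref}|\;\le\;d\big(\eta,g^{(\theta^{ref})}\big)+2\|\epsilon\|_\infty\|\theta^{ref}\|_1,$$ where $|\theta^{ref}|$ is the entrywise absolute value.
   Context: Standard setup. Let $n\ge1$, $k\ge2$, $p\ge1$ be integers and $m=p+k$. There are $n$ data points $x_1,\dots,x_n$ and $p$ rules $h^{(1)},\dots,h^{(p)}$, each a map from $\{x_1,\dots,x_n\}$ to $\{1,\dots,k\}\cup\{?\}$, where ''?'' means abstain. Let $n_j\ge1$ be the number of indices $i$ with $h^{(j)}(x_i)\neq ?$. $\Delta_k$ denotes the probability simplex in $\mathbb{R}^k$; an element $z\in\Delta_k^n\subset\mathbb{R}^{nk}$ is written $z=(z_1,\dots,z_n)$ with $z_i=(z_{i1},\dots,z_{ik})\in\Delta_k$. For $j\le p$ let $h^{(j)}\in\{0,1\}^{nk}$ also denote the vector with $h^{(j)}_{i\ell}=1$ iff $h^{(j)}(x_i)=\ell$; for $\ell\le k$ let $\vec e^{\,n}_\ell\in\{0,1\}^{nk}$ have entries $(\vec e^{\,n}_\ell)_{i\ell'}=\mathbf 1(\ell'=\ell)$. The matrix $A\in\mathbb{R}^{m\times nk}$ has rows $a^{(j)}=h^{(j)}/n_j$ for $1\le j\le p$ and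 $a^{(p+\ell)}=\vec e^{\,n}_\ell/n$ for $1\le\ell\le k$. For $\theta\in\mathbb{R}^m$ put $a^{(\theta)}=A^\top\theta\in\mathbb{R}^{nk}$ (entries $a^{(\theta)}_{i\ell}$) and define $g^{(\theta)}\in\Delta_k^n$ by $g^{(\theta)}_{i\ell}=\exp(a^{(\theta)}_{i\ell})/\sum_{\ell'=1}^k\exp(a^{(\theta)}_{i\ell'})$; let $\mathcal G=\{g^{(\theta)}:\theta\in\mathbb{R}^m\}$. A fixed ''true labeling'' $\eta\in\Delta_k^n$ is given and $b^*:=A\eta\in\mathbb{R}^m$. Given $b\in\mathbb{R}^m$ and $\epsilon\in\mathbb{R}^m$ with $\epsilon\ge0$ and $b-\epsilon\le b^*\le b+\epsilon$ (entrywise), let $P=\{z\in\Delta_k^n:\ b-\epsilon\le Az\le b+\epsilon\}$ (entrywise). Logarithms act entrywise; $z\cdot\log g=\sum_{i,\ell}z_{i\ell}\log g_{i\ell}$ with conventions $0\log 0=0$, $\log 0=-\infty$. The maximum-entropy element of $P$ is the unique minimizer of $z\cdot\log z$ over $P$. For $\mu,\nu\in\Delta_k^n$, $d(\mu,\nu)=\sum_{i=1}^n\mathrm{KL}(\mu_i\|\nu_i)=\sum_{i,\ell}\mu_{i\ell}\log(\mu_{i\ell}/\nu_{i\ell})$, with $0\log(0/x)=0$. *)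

From HB Require Import structures.
From mathcomp Require Import all_boot all_order all_algebra.
From mathcomp Require Import all_classical all_reals.
From mathcomp Require Import ereal sequences exp.
Set Implicit Arguments. Unset Strict Implicit. Unset Printing Implicit Defensive.
Import Order.TTheory GRing.Theory Num.Theory.
Local Open Scope ring_scope.

Section Defs.
Variable R : realType.
Variables n k p : nat.

Definition vec := 'I_n -> 'I_k -> R.

(* rules: h j i = Some l  iff  h^{(j)}(x_i) = l ;  None = abstain "?" *)
Definition rules := 'I_p -> 'I_n -> option 'I_k.

Definition hvec (h : rules) (j : 'I_p) : vec :=
  fun i l => if h j i == Some l then 1 else 0.

Definition nj (h : rules) (j : 'I_p) : nat := #|[pred i | h j i != None]|.

Definition Arow (h : rules) (r : 'I_(p + k)) : vec :=
  fun i l => match fintype.split r with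
             | inl j => hvec h j i l / (nj h j)%:R
             | inr l' => (if l == l' then 1 else 0) / n%:R
             end.

Definition Amul (h : rules) (z : vec) : 'I_(p + k) -> R :=
  fun r => \sum_(i < n) \sum_(l < k) Arow h r i l * z i l.

Definition atheta (h : rules) (th : 'I_(p + k) -> R) : vec :=
  fun i l => \sum_(r < p + k) th r * Arow h r i l.

Definition gtheta (h : rules) (th : 'I_(p + k) -> R) : vec :=
  fun i l => expR (atheta h th i l) / \sum_(l' < k) expR (atheta h th i l').

Definition in_simplex (z : vec) : Prop :=
  forall i, (forall l, 0 <= z i l) /\ \sum_(l < k) z i l = 1.

Definition inP (h : rules) (b eps : 'I_(p + k) -> R) (z : vec) : Prop :=
  in_simplex z /\ forall r, b r - eps r <= Amul h z r <= b r + eps r.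

Definition xlnx (x : R) : R := if x == 0 then 0 else x * ln x.

Definition negent (z : vec) : R := \sum_(i < n) \sum_(l < k) xlnx (z i l).

Definition klterm (a c : R) : \bar R :=
  if a == 0 then 0%E else if c == 0 then +oo%E else (a * ln (a / c))%:E.

Definition dKL (mu nu : vec) : \bar R :=
  (\sum_(i < n) \sum_(l < k) klterm (mu i l) (nu i l))%E.

Definition dot_abs (eps th : 'I_(p + k) -> R) : R :=
  \sum_(r < p + k) eps r * `|th r|.

Definition norm_inf (v : 'I_(p + k) -> R) : R := \big[Num.max/0]_(r < p + k) `|v r|.
Definition norm_1 (v : 'I_(p + k) -> R) : R := \sum_(r < p + k) `|v r|.

End Defs.

From HB Require Import structures.
From mathcomp Require Import all_boot all_order all_algebra.
From mathcomp Require Import all_classical all_reals.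
From mathcomp Require Import ereal sequences exp.
From mathcomp Require Import ring lra.
Set Implicit Arguments.
Unset Strict Implicit.
Unset Printing Implicit Defensive.

Import Order.TTheory GRing.Theory Num.Theory.
Local Open Scope ring_scope.

(* The feasible set P is convex and contains eta, so the mixtures
   z_t = (1 - t) g + t eta of the maximum-entropy element g lie in P, and
   z_t . log z_t >= g . log g.  Expanding x log x at z_t through Gibbs'
   inequality turns this into t d(eta, z_t) <= t (eta . log eta - g . log g).
   Letting t -> 0 first shows that g > 0 wherever eta > 0 (otherwise
   d(eta, z_t) grows like -log t) and then gives the first inequality.
   For the second, Gibbs' inequality g . log g^(theta) <= g . log g and the
   identity z . log g^(theta) = theta . A z - sum_i log Z_i reduce the gap to
   theta . (A g - A eta), and A g, A eta both lie within eps of b. *)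

Section RelativeEntropyTerm.
Variable R : realType.
Implicit Types a c t x y : R.

(* Agrees with [klterm] except when [a != 0] and [c = 0], where [klterm] is
   [+oo]; every use below has [c > 0] whenever [a != 0]. *)
Definition kl a c : R := if a == 0 then 0 else a * ln (a / c).

Lemma ln_le_subr1 {x} : 0 < x -> ln x <= x - 1.
Proof. by move=> x0; have := @le_ln1Dx R (x - 1); rewrite addrCA subrr addr0; apply; lra. Qed.

Lemma mul_ln_le_xlnx {a c} : 0 <= a -> 0 < c -> a * ln c <= xlnx a + (c - a).
Proof.
move=> a0 c0; rewrite /xlnx; have [->|an0] := eqVneq a 0; first by rewrite mul0r add0r subr0 ltW.
have ap : 0 < a by rewrite lt_def an0.
have -> : c = a * (c / a) by rewrite mulrC divfK.
rewrite lnM ?posrE ?divr_gt0 // mulrDr lerD2l.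
have := ler_wpM2l (ltW ap) (ln_le_subr1 (divr_gt0 c0 ap)).
by rewrite mulrBr mulr1 mulrCA divff // mulr1.
Qed.

Lemma kl_xlnx {a c} : 0 <= a -> 0 < c -> kl a c = xlnx a - a * ln c.
Proof.
move=> a0 c0; rewrite /kl /xlnx; have [->|an0] := eqVneq a 0; first by rewrite mul0r subr0.
have ap : 0 < a by rewrite lt_def an0.
by rewrite ln_div ?posrE // mulrBr.
Qed.

Lemma kl_ge_subr a c : 0 <= a -> 0 <= c -> (a != 0 -> 0 < c) -> a - c <= kl a c.
Proof.
move=> a0 c0 ac; have [->|an0] := eqVneq a 0; first by rewrite /kl eqxx; lra.
rewrite kl_xlnx // ?ac //; have := mul_ln_le_xlnx a0 (ac an0); lra.
Qed.

Lemma kl_scale t a : 0 < t -> 0 < a -> kl a (t * a) = - (a * ln t).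
Proof.
move=> t0 a0; rewrite /kl gt_eqF //= invfM mulrCA divff ?gt_eqF // mulr1.
by rewrite lnV ?posrE // mulrN.
Qed.

Lemma xlnx_mix_le t x y : 0 < t < 1 -> 0 <= x -> 0 <= y ->
  xlnx ((1 - t) * x + t * y) <= (1 - t) * xlnx x + t * xlnx y
    + (1 - t) * ((1 - t) * x + t * y - x) - t * kl y ((1 - t) * x + t * y).
Proof.
move=> /andP[t0 t1] x0 y0; set z := _ + _.
have z0 : 0 <= z by rewrite /z addr_ge0 // mulr_ge0 //; lra.
have [zz|zn0] := eqVneq z 0.
  have [-> ->] : x = 0 /\ y = 0 by split; apply/le_anti; rewrite /z in zz; apply/andP; split; nra.
  by rewrite zz /xlnx /kl !eqxx; lra.
have zp : 0 < z by rewrite lt_def zn0.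
have -> : xlnx z = (1 - t) * (x * ln z) + t * (y * ln z).
  by rewrite /xlnx (negbTE zn0) {1}/z mulrDl !mulrA.
have s0 : 0 <= 1 - t by lra.
have := ler_wpM2l s0 (mul_ln_le_xlnx x0 zp).
rewrite mulrDr (kl_xlnx y0 zp); lra.
Qed.

Lemma kl_mix_ge t x y : 0 < t < 1 -> 0 <= x -> 0 <= y -> (y != 0 -> 0 < x) ->
  kl y x <= kl y ((1 - t) * x + t * y) + t * (y * (y / x - 1)).
Proof.
move=> /andP[t0 t1] x0 y0 yx; have [->|yn0] := eqVneq y 0; first by rewrite /kl eqxx; lra.
have yp : 0 < y by rewrite lt_def yn0.
have xp := yx yn0; set z := (1 - t) * x + t * y.
have zp : 0 < z by rewrite /z; nra.
rewrite !kl_xlnx //.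
have := ln_le_subr1 (divr_gt0 zp xp); rewrite ln_div ?posrE //.
have -> : z / x - 1 = t * (y / x - 1).
  by rewrite /z mulrDl mulfK ?gt_eqF // -mulrA mulrBr mulr1; lra.
move=> /(ler_wpM2l (ltW yp)); rewrite !mulrBr; lra.
Qed.

Lemma ler_add_tmul x y c : (forall t, 0 < t < 1 -> x <= y + t * c) -> x <= y.
Proof.
move=> H; apply/ler_addgt0Pr => e e0; set d := e + `|c| + 1.
have d0 : 0 < d by rewrite /d; have := normr_ge0 c; lra.
have t01 : 0 < e / d < 1 by rewrite divr_gt0 //= ltr_pdivrMr // mul1r /d; have := normr_ge0 c; lra.
apply: (le_trans (H _ t01)); rewrite lerD2l mulrAC ler_pdivrMr // ler_wpM2l ?ltW //.
by rewrite /d; have := ler_norm c; lra.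
Qed.

End RelativeEntropyTerm.

Section DoubleSums.
Variables (R : realType) (n k : nat).
Implicit Types (F G : 'I_n -> 'I_k -> R) (z w : vec R n k).

Definition sum2 F : R := \sum_(i < n) \sum_(l < k) F i l.

Lemma sum2D F G : sum2 (fun i l => F i l + G i l) = sum2 F + sum2 G.
Proof. by rewrite /sum2 -big_split; apply: eq_bigr => i _; rewrite big_split. Qed.

Lemma sum2B F G : sum2 (fun i l => F i l - G i l) = sum2 F - sum2 G.
Proof. by rewrite /sum2 -sumrB; apply: eq_bigr => i _; rewrite sumrB. Qed.

Lemma sum2Z c F : sum2 (fun i l => c * F i l) = c * sum2 F.
Proof. by rewrite /sum2 mulr_sumr; apply: eq_bigr => i _; rewrite mulr_sumr. Qed.

Lemma ler_sum2 F G : (forall i l, F i l <= G i l) -> sum2 F <= sum2 G.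
Proof. by move=> FG; apply: ler_sum => i _; apply: ler_sum. Qed.

Lemma sum2_ge_term F i l : (forall i l, 0 <= F i l) -> F i l <= sum2 F.
Proof.
move=> F0; rewrite /sum2 (bigD1 i) //= (bigD1 l) //= -addrA lerDl.
by rewrite addr_ge0 ?sumr_ge0 // => j _; rewrite sumr_ge0.
Qed.

Lemma sum2_simplexB z w : in_simplex z -> in_simplex w ->
  sum2 (fun i l => z i l - w i l) = 0.
Proof. by move=> hz hw; rewrite /sum2 big1 // => i _; rewrite sumrB (hz i).2 (hw i).2 subrr. Qed.

End DoubleSums.

Section Mixtures.
Variables (R : realType) (n k p : nat).
Implicit Types (g e : vec R n k) (t : R).

Definition mix t g e : vec R n k := fun i l => (1 - t) * g i l + t * e i l.

Lemma in_simplex_mix t g e : 0 <= t <= 1 -> in_simplex g -> in_simplex e ->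
  in_simplex (mix t g e).
Proof.
move=> /andP[t0 t1] hg he i; split => [l|].
  by rewrite /mix addr_ge0 // mulr_ge0 ?(hg i).1 ?(he i).1 //; lra.
by rewrite /mix big_split /= -!mulr_sumr (hg i).2 (he i).2; lra.
Qed.

Lemma Amul_mix (h : rules n k p) t g e r :
  Amul h (mix t g e) r = (1 - t) * Amul h g r + t * Amul h e r.
Proof.
rewrite /Amul !mulr_sumr -big_split; apply: eq_bigr => i _.
by rewrite !mulr_sumr -big_split; apply: eq_bigr => l _; rewrite /mix /=; ring.
Qed.

Lemma inP_mix (h : rules n k p) b eps t g e : 0 <= t <= 1 ->
  inP h b eps g -> inP h b eps e -> inP h b eps (mix t g e).
Proof.
move=> t01 [hg Ag] [he Ae]; split; first exact: in_simplex_mix.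
move=> r; rewrite Amul_mix; move: (Ag r) (Ae r) t01.
move=> /andP[g1 g2] /andP[e1 e2] /andP[t0 t1]; apply/andP; split; nra.
Qed.

End Mixtures.

Lemma sum2_kl_ge (R : realType) (n k : nat) (e z : vec R n k) i l :
  in_simplex e -> in_simplex z -> (forall i l, e i l != 0 -> 0 < z i l) ->
  kl (e i l) (z i l) - (e i l - z i l) <= sum2 (fun i l => kl (e i l) (z i l)).
Proof.
move=> he hz ez; rewrite -[X in _ <= X]subr0 -(sum2_simplexB he hz) -sum2B /=.
apply: sum2_ge_term => i' l'.
by rewrite subr_ge0; apply: kl_ge_subr; [exact: (he _).1 | exact: (hz _).1 | exact: ez].
Qed.

Section MaximumEntropy.
Variables (R : realType) (n k p : nat) (h : rules n k p).
Variables (e g : vec R n k) (b eps : 'I_(p + k) -> R).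
Hypothesis he : in_simplex e.
Hypothesis hAe : forall r, b r - eps r <= Amul h e r <= b r + eps r.
Hypothesis hgP : inP h b eps g.
Hypothesis hgmin : forall z, inP h b eps z -> negent g <= negent z.

Let hg : in_simplex g := hgP.1.

Lemma sum2_kl_mix_le t : 0 < t < 1 ->
  sum2 (fun i l => kl (e i l) (mix t g e i l)) <= negent e - negent g.
Proof.
move=> t01; have /andP[t0 t1] := t01.
have t01' : 0 <= t <= 1 by rewrite !ltW.
have mix_min := hgmin (inP_mix t01' hgP (conj he hAe)).
have : negent (mix t g e) <= (1 - t) * negent g + t * negent e
    - t * sum2 (fun i l => kl (e i l) (mix t g e i l)).
  apply: le_trans (ler_sum2 (fun i l => xlnx_mix_le t01 ((hg i).1 l) ((he i).1 l))) _.
  rewrite sum2B !sum2D !sum2Z (sum2_simplexB (in_simplex_mix t01' hg he) hg).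
  by rewrite mulr0 addr0.
by move=> mix_le; rewrite -(ler_pM2l t0); lra.
Qed.

(* Near a zero of g with e > 0 the mixtures pay kl (e i l) (t * e i l) = - e i l * ln t,
   which is unbounded as t -> 0. *)
Lemma maxent_gt0 i l : e i l != 0 -> 0 < g i l.
Proof.
move=> en0; have ep : 0 < e i l by rewrite lt_def en0 (he i).1.
rewrite lt_def (hg i).1 andbT; apply/eqP => g0.
set C := negent e - negent g; set t := expR (- ((`|C| + e i l + 1) / e i l)).
have t0 : 0 < t := expR_gt0 _.
have t1 : t < 1 by rewrite expR_lt1 oppr_lt0 divr_gt0 //; have := normr_ge0 C; lra.
have t01 : 0 < t < 1 by rewrite t0.
have t01' : 0 <= t <= 1 by rewrite !ltW.
have mix_pos : forall i l, e i l != 0 -> 0 < mix t g e i l.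
  move=> i' l' en0'; have : 0 < e i' l' by rewrite lt_def en0' (he i').1.
  by have := (hg i').1 l'; rewrite /mix; nra.
have := le_trans (sum2_kl_ge i l he (in_simplex_mix t01' hg he) mix_pos)
                 (sum2_kl_mix_le t01).
rewrite /mix g0 mulr0 add0r kl_scale // expRK mulrN opprK mulrC divfK ?gt_eqF //.
have := ler_norm C; have : 0 <= t * e i l by rewrite mulr_ge0 ?ltW.
rewrite -/C; lra.
Qed.

Lemma sum2_kl_maxent_le : sum2 (fun i l => kl (e i l) (g i l)) <= negent e - negent g.
Proof.
apply: (ler_add_tmul (c := sum2 (fun i l => e i l * (e i l / g i l - 1)))) => t t01.
apply: le_trans (lerD (sum2_kl_mix_le t01) (lexx (t * _))).
rewrite -sum2Z -sum2D; apply: ler_sum2 => i l.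
by apply: kl_mix_ge => //; [exact: (hg i).1 | exact: (he i).1 | exact: maxent_gt0].
Qed.

End MaximumEntropy.

Section Softmax.
Variables (R : realType) (n k p : nat) (h : rules n k p) (th : 'I_(p + k) -> R).
Hypothesis k_gt0 : (0 < k)%N.

Definition partition (i : 'I_n) : R := \sum_(l < k) expR (atheta h th i l).

Lemma partition_gt0 i : 0 < partition i.
Proof.
apply: lt_le_trans (expR_gt0 (atheta h th i (Ordinal k_gt0))) _.
by rewrite /partition (bigD1 (Ordinal k_gt0)) //= lerDl sumr_ge0 // => l _; rewrite expR_ge0.
Qed.

Lemma gtheta_gt0 i l : 0 < gtheta h th i l.
Proof. by rewrite divr_gt0 ?expR_gt0 ?partition_gt0. Qed.

Lemma ln_gtheta i l : ln (gtheta h th i l) = atheta h th i l - ln (partition i).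
Proof. by rewrite ln_div ?posrE ?expR_gt0 ?partition_gt0 // expRK. Qed.

Lemma in_simplex_gtheta : in_simplex (gtheta h th).
Proof.
move=> i; split => [l|]; first exact: ltW (gtheta_gt0 i l).
by rewrite /gtheta -mulr_suml divff // gt_eqF // partition_gt0.
Qed.

Lemma sum2_mul_atheta (z : vec R n k) :
  sum2 (fun i l => z i l * atheta h th i l) = \sum_r th r * Amul h z r.
Proof.
rewrite /sum2 /Amul /atheta.
transitivity (\sum_i \sum_r \sum_l z i l * (th r * Arow R h r i l)).
  by apply: eq_bigr => i _; under eq_bigr do rewrite mulr_sumr; rewrite exchange_big.
rewrite exchange_big; apply: eq_bigr => r _; rewrite mulr_sumr; apply: eq_bigr => i _.
by rewrite mulr_sumr; apply: eq_bigr => l _; rewrite mulrCA [z i l * _]mulrC.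
Qed.

Lemma sum2_mul_ln_gtheta (z : vec R n k) : in_simplex z ->
  sum2 (fun i l => z i l * ln (gtheta h th i l))
    = \sum_r th r * Amul h z r - \sum_i ln (partition i).
Proof.
move=> hz; rewrite -sum2_mul_atheta /sum2 -sumrB; apply: eq_bigr => i _.
under eq_bigr do rewrite ln_gtheta mulrBr.
by rewrite sumrB -mulr_suml (hz i).2 mul1r.
Qed.

End Softmax.

Lemma dot_ge_neg_dot_abs (R : realType) (m : nat) (th u eps : 'I_m -> R) :
  (forall r, `|u r| <= eps r) -> - \sum_r eps r * `|th r| <= \sum_r th r * u r.
Proof.
move=> ueps; rewrite -sumrN; apply: ler_sum => r _.
have := ler_wpM2l (normr_ge0 (th r)) (ueps r).
by rewrite -normrM [X in _ <= X]mulrC ler_norml => /andP[].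
Qed.

Lemma gibbs_sum2 (R : realType) (n k : nat) (g q : vec R n k) :
  in_simplex g -> in_simplex q -> (forall i l, 0 < q i l) ->
  sum2 (fun i l => g i l * ln (q i l)) <= negent g.
Proof.
move=> hg hq q0; apply: le_trans (ler_sum2 (fun i l => mul_ln_le_xlnx ((hg i).1 l) (q0 i l))) _.
by rewrite sum2D (sum2_simplexB hq hg) addr0.
Qed.

Lemma negent_gap_le_kl_gtheta (R : realType) (n k p : nat) (h : rules n k p)
    (th : 'I_(p + k) -> R) (e g : vec R n k) (b eps : 'I_(p + k) -> R) :
  (0 < k)%N -> in_simplex e -> (forall r, b r - eps r <= Amul h e r <= b r + eps r) ->
  inP h b eps g ->
  negent e - negent g <= sum2 (fun i l => kl (e i l) (gtheta h th i l)) + 2 * dot_abs eps th.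
Proof.
move=> k_gt0 he hAe [hg hAg].
have G0 := gtheta_gt0 h th k_gt0.
have kl_split : sum2 (fun i l => kl (e i l) (gtheta h th i l))
    = negent e - sum2 (fun i l => e i l * ln (gtheta h th i l)).
  by rewrite -sum2B; apply: eq_bigr => i _; apply: eq_bigr => l _; rewrite kl_xlnx ?(he i).1.
have := gibbs_sum2 hg (in_simplex_gtheta h th k_gt0) G0.
have gap : - (2 * dot_abs eps th)
    <= \sum_r th r * Amul h g r - \sum_r th r * Amul h e r.
  rewrite /dot_abs mulr_sumr -sumrB; under eq_bigr do rewrite mulrA.
  under [X in _ <= X]eq_bigr do rewrite -mulrBr.
  apply: dot_ge_neg_dot_abs => r; rewrite ler_norml.
  by move: (hAe r) (hAg r) => /andP[? ?] /andP[? ?]; apply/andP; split; lra.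
by move: gap; rewrite kl_split !sum2_mul_ln_gtheta //; lra.
Qed.

Lemma dKL_finite (R : realType) (n k : nat) (mu nu : vec R n k) :
  (forall i l, mu i l != 0 -> nu i l != 0) ->
  dKL mu nu = (sum2 (fun i l => kl (mu i l) (nu i l)))%:E.
Proof.
move=> munu; rewrite /dKL /sum2 -sumEFin; apply: eq_bigr => i _.
rewrite -sumEFin; apply: eq_bigr => l _; rewrite /klterm /kl.
by case: eqVneq => // /munu/negbTE ->.
Qed.

Lemma dot_abs_le_norm (R : realType) (k p : nat) (eps th : 'I_(p + k) -> R) :
  dot_abs eps th <= norm_inf eps * norm_1 th.
Proof.
rewrite /dot_abs /norm_1 mulr_sumr; apply: ler_sum => r _.
rewrite ler_wpM2r ?normr_ge0 //; apply: le_trans (ler_norm (eps r)) _.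
exact: (le_bigmax 0 (fun r => `|eps r|) r).
Qed.

Theorem mainTheorem8 (R : realType) (n k p : nat)
  (hn : (1 <= n)%N) (hk : (2 <= k)%N) (hp : (1 <= p)%N)
  (h : rules n k p) (hnj : forall j, (1 <= nj h j)%N)
  (eta : vec R n k) (heta : in_simplex eta)
  (b eps : 'I_(p + k) -> R) (heps : forall r, 0 <= eps r)
  (hb : forall r, b r - eps r <= Amul h eta r <= b r + eps r)
  (gbf : vec R n k) (hgbfP : inP h b eps gbf)
  (hgbfmin : forall z, inP h b eps z -> negent gbf <= negent z)
  (V : R) (hV : V = negent gbf)
  (thref : 'I_(p + k) -> R) :
  [/\ (dKL eta gbf <= (- V + negent eta)%:E)%E,
      ((- V + negent eta)%:E <= dKL eta (gtheta h thref) + (2 * dot_abs eps thref)%:E)%E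
    & (dKL eta (gtheta h thref) + (2 * dot_abs eps thref)%:E
        <= dKL eta (gtheta h thref) + (2 * norm_inf eps * norm_1 thref)%:E)%E].
Proof.
have k_gt0 : (0 < k)%N by apply: leq_trans hk.
have maxent_le := sum2_kl_maxent_le heta hb hgbfP hgbfmin.
have gap_le := negent_gap_le_kl_gtheta thref k_gt0 heta hb hgbfP.
rewrite hV (@dKL_finite _ _ _ eta gbf); last first.
  by move=> i l /(maxent_gt0 heta hb hgbfP hgbfmin)/gt_eqF ->.
rewrite dKL_finite => [|i l _]; last by rewrite gt_eqF ?gtheta_gt0.
rewrite -!EFinD !lee_fin -mulrA lerD2l ler_wpM2l ?dot_abs_le_norm //.
by split; lra.
Qed.
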